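(* Let $p$ be a prime and let $c:\mathbb{Z}\to\{B,R\}$ be a periodic coloring such that for every positive integer $d$ with $p\nmid d$ and every $a\in\mathbb{Z}$, the values $c(a),c(a+d),c(a+2d),c(a+3d)$ are not all equal. Then every period $T\ge1$ of $c$ (i.e. every $T$ with $c(n+T)=c(n)$ for all $n$) satisfies $T\ge p$. *)

From Stdlib Require Import ZArith Znumtheory.
Open Scope Z_scope.

Inductive color : Type := B | R.

Definition is_period (c : Z -> color) (T : Z) : Prop :=
  forall n : Z, c (n + T) = c n.

Definition periodic (c : Z -> color) : Prop :=
  exists T : Z, 1 <= T /\ is_period c T.

From Stdlib Require Import ZArith Znumtheory Lia.
Open Scope Z_scope.

(* A period T < p is not divisible by p, yet c is constant along every
   progression of difference T, in particular on a, a+T, a+2T, a+3T. *)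

Lemma is_period_mul (c : Z -> color) (T : Z) (k : nat) :
  is_period c T -> is_period c (Z.of_nat k * T).
Proof.
  intros hT n; induction k as [|k IH].
  - now rewrite Z.mul_0_l, Z.add_0_r.
  - replace (n + Z.of_nat (S k) * T) with ((n + Z.of_nat k * T) + T) by lia.
    now rewrite hT.
Qed.

Lemma period_progression (c : Z -> color) (T a : Z) :
  is_period c T ->
  c a = c (a + T) /\ c a = c (a + 2 * T) /\ c a = c (a + 3 * T).
Proof.
  intros hT.
  pose proof (is_period_mul c T 2 hT a) as h2.
  pose proof (is_period_mul c T 3 hT a) as h3.
  simpl Z.of_nat in h2, h3.
  now rewrite hT, h2, h3.
Qed.

Lemma not_divide_lt (p d : Z) : 0 < d < p -> ~ (p | d).
Proof. intros hd hpd; apply Z.divide_pos_le in hpd; lia. Qed.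

Theorem theorem6 (p : Z) (hp : prime p) (c : Z -> color)
  (hper : periodic c)
  (hnoAP : forall d a : Z, 0 < d -> ~ (p | d) ->
     ~ (c a = c (a + d) /\ c a = c (a + 2 * d) /\ c a = c (a + 3 * d))) :
  forall T : Z, 1 <= T -> is_period c T -> p <= T.
Proof.
  intros T hT hTp.
  destruct (Z_le_gt_dec p T) as [hle | hgt]; [exact hle |].
  exfalso.
  apply (hnoAP T 0).
  - lia.
  - apply not_divide_lt; lia.
  - exact (period_progression c T 0 hTp).
Qed.
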